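(* Let $w_0\ge w_1\ge\cdots\ge w_{n-1}$ be positive real numbers with sum $W$. Then $$\sum_{i=0}^{n-1} w_i\Bigl(\tfrac12+\lfloor \log_2(i+1)\rfloor\Bigr)\ \ge\ \sum_{i=0}^{n-1}\tfrac12\, w_i\log_2(W/w_i).$$ *)

From Stdlib Require Import Reals Lra Lia.
Open Scope R_scope.

Definition log2R (x : R) : R := ln x / ln 2.

Fixpoint sumR (n : nat) (f : nat -> R) : R :=
  match n with
  | O => 0
  | S m => sumR m f + f m
  end.

From Stdlib Require Import Reals Lra Lia.
Open Scope R_scope.

(* With p_i = w_i / W the right-hand side is half the entropy of p and the
   left-hand side half the expected length 1 + 2 floor(log2 (i+1)) of the Elias
   gamma code of i+1.  The weights 2^-(length) have Kraft sum at most 1, so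
   the bound is Gibbs' inequality. *)

Lemma sumR_ext n f g :
  (forall i, (i < n)%nat -> f i = g i) -> sumR n f = sumR n g.
Proof.
  induction n as [|n IH]; intros Hfg; simpl; [reflexivity|].
  rewrite IH, Hfg; [reflexivity | lia | intros; apply Hfg; lia].
Qed.

Lemma sumR_le n f g :
  (forall i, (i < n)%nat -> f i <= g i) -> sumR n f <= sumR n g.
Proof.
  induction n as [|n IH]; intros Hfg; simpl; [lra|].
  assert (sumR n f <= sumR n g) by (apply IH; intros; apply Hfg; lia).
  assert (f n <= g n) by (apply Hfg; lia).
  lra.
Qed.

Lemma sumR_minus n f g :
  sumR n (fun i => f i - g i) = sumR n f - sumR n g.
Proof. induction n as [|n IH]; simpl; [lra|]. rewrite IH; ring. Qed.

Lemma sumR_scal n c f :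
  sumR n (fun i => c * f i) = c * sumR n f.
Proof. induction n as [|n IH]; simpl; [ring|]. rewrite IH; ring. Qed.

Lemma sumR_const n c : sumR n (fun _ => c) = INR n * c.
Proof. induction n as [|n IH]; cbn [sumR]; [simpl; ring|]. rewrite IH, S_INR; ring. Qed.

Lemma sumR_split a b f :
  sumR (a + b) f = sumR a f + sumR b (fun j => f (a + j)%nat).
Proof.
  induction b as [|b IH]; simpl; [rewrite Nat.add_0_r; ring|].
  rewrite Nat.add_succ_r; simpl; rewrite IH; ring.
Qed.

Lemma sumR_pos n f :
  (0 < n)%nat -> (forall i, (i < n)%nat -> 0 < f i) -> 0 < sumR n f.
Proof.
  induction n as [|n IH]; intros Hn Hf; [lia|]; cbn [sumR].
  assert (0 < f n) by (apply Hf; lia).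
  destruct n as [|n]; [simpl; lra|].
  assert (0 < sumR (S n) f) by (apply IH; [lia | intros; apply Hf; lia]).
  lra.
Qed.

Lemma sumR_le_mono m n f :
  (m <= n)%nat -> (forall i, 0 <= f i) -> sumR m f <= sumR n f.
Proof.
  intros Hmn Hf.
  replace n with (m + (n - m))%nat by lia.
  rewrite sumR_split.
  assert (0 <= sumR (n - m) (fun j => f (m + j)%nat)).
  { rewrite <- (Rmult_0_r (INR (n - m))), <- sumR_const.
    apply sumR_le; intros; apply Hf. }
  lra.
Qed.

Lemma ln_le_sub_1 x : 0 < x -> ln x <= x - 1.
Proof.
  intros Hx; pose proof (exp_ineq1_le (ln x)) as Hexp.
  rewrite exp_ln in Hexp; lra.
Qed.

Lemma gibbs_inequality n p q :
  (forall i, (i < n)%nat -> 0 < p i) ->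
  (forall i, (i < n)%nat -> 0 < q i) ->
  sumR n q <= sumR n p ->
  sumR n (fun i => p i * ln (q i / p i)) <= 0.
Proof.
  intros Hp Hq Hsum.
  apply Rle_trans with (sumR n (fun i => q i - p i)).
  - apply sumR_le; intros i Hi.
    specialize (Hp i Hi); specialize (Hq i Hi).
    assert (ln (q i / p i) <= q i / p i - 1)
      by (apply ln_le_sub_1, Rdiv_lt_0_compat; assumption).
    replace (q i - p i) with (p i * (q i / p i - 1)) by (field; lra).
    apply Rmult_le_compat_l; lra.
  - rewrite sumR_minus; lra.
Qed.

(* 2^-(length of the Elias gamma codeword of i+1). *)
Definition gamma_weight (i : nat) : R := / 2 ^ (2 * Nat.log2 (i + 1) + 1).

Lemma log2_in_level k j : (j < 2 ^ k)%nat -> Nat.log2 (2 ^ k + j) = k.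
Proof.
  intros Hj; apply Nat.log2_unique; [lia|].
  rewrite Nat.pow_succ_r'; lia.
Qed.

Lemma gamma_weight_level_sum k :
  sumR (2 ^ k) (fun j => gamma_weight (2 ^ k - 1 + j)) = / 2 ^ (k + 1).
Proof.
  assert (Hk : (0 < 2 ^ k)%nat) by (apply Nat.neq_0_lt_0, Nat.pow_nonzero; lia).
  rewrite (sumR_ext _ _ (fun _ => / 2 ^ (2 * k + 1))).
  - rewrite sumR_const, pow_INR; replace (INR 2) with 2 by (simpl; lra).
    replace (2 * k + 1)%nat with (k + k + 1)%nat by lia.
    rewrite !pow_add; field; apply pow_nonzero; lra.
  - intros j Hj; unfold gamma_weight.
    replace (2 ^ k - 1 + j + 1)%nat with (2 ^ k + j)%nat by lia.
    rewrite log2_in_level by lia; reflexivity.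
Qed.

Lemma gamma_weight_full_sum K : sumR (2 ^ K - 1) gamma_weight = 1 - / 2 ^ K.
Proof.
  induction K as [|K IH]; [simpl; lra|].
  assert (Hk : (0 < 2 ^ K)%nat) by (apply Nat.neq_0_lt_0, Nat.pow_nonzero; lia).
  replace (2 ^ S K - 1)%nat with ((2 ^ K - 1) + 2 ^ K)%nat
    by (rewrite Nat.pow_succ_r'; lia).
  rewrite sumR_split, IH, gamma_weight_level_sum, Nat.add_1_r; simpl.
  field; apply pow_nonzero; lra.
Qed.

Lemma gamma_weight_pos i : 0 < gamma_weight i.
Proof. apply Rinv_0_lt_compat, pow_lt; lra. Qed.

Lemma kraft_gamma_weight n : sumR n gamma_weight <= 1.
Proof.
  apply Rle_trans with (sumR (2 ^ n - 1) gamma_weight).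
  - apply sumR_le_mono; [|intros; apply Rlt_le, gamma_weight_pos].
    assert (n < 2 ^ n)%nat by (apply Nat.pow_gt_lin_r; lia); lia.
  - rewrite gamma_weight_full_sum.
    assert (0 < / 2 ^ n) by (apply Rinv_0_lt_compat, pow_lt; lra); lra.
Qed.

Lemma ln_gamma_weight i :
  ln (gamma_weight i) = - (2 * INR (Nat.log2 (i + 1)) + 1) * ln 2.
Proof.
  unfold gamma_weight.
  rewrite ln_Rinv, ln_pow, plus_INR, mult_INR by (try apply pow_lt; lra).
  simpl; ring.
Qed.

Lemma gibbs_term_gamma_weight W x i : 0 < W -> 0 < x ->
  x * ln (W * gamma_weight i / x)
  = 2 * ln 2 * (1/2 * x * log2R (W / x) - x * (1/2 + INR (Nat.log2 (i + 1)))).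
Proof.
  intros HW Hx.
  assert (Hln2 : 0 < ln 2) by (pose proof ln_lt_2; lra).
  replace (W * gamma_weight i / x) with (W / x * gamma_weight i) by (field; lra).
  rewrite ln_mult, ln_gamma_weight
    by (try apply Rdiv_lt_0_compat; try apply gamma_weight_pos; lra).
  unfold log2R; field; lra.
Qed.

Theorem lemma6 (n : nat) (w : nat -> R)
  (hpos : forall i, (i < n)%nat -> 0 < w i)
  (hmon : forall i j, (i <= j < n)%nat -> w j <= w i) :
  let W := sumR n w in
  sumR n (fun i => w i * (1/2 + INR (Nat.log2 (i + 1))))
  >= sumR n (fun i => 1/2 * w i * log2R (W / w i)).
Proof.
  intros W.
  destruct n as [|m]; [simpl; lra|].
  assert (HW : 0 < W) by (apply sumR_pos; [lia | exact hpos]).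
  assert (Hln2 : 0 < ln 2) by (pose proof ln_lt_2; lra).
  set (q i := W * gamma_weight i).
  assert (Hq : forall i, (i < S m)%nat -> 0 < q i)
    by (intros; apply Rmult_lt_0_compat; [exact HW | apply gamma_weight_pos]).
  assert (Hsum : sumR (S m) q <= sumR (S m) w).
  { unfold q; rewrite sumR_scal; pose proof (kraft_gamma_weight (S m)); fold W; nra. }
  pose proof (gibbs_inequality (S m) w q hpos Hq Hsum) as Hgibbs; unfold q in Hgibbs.
  rewrite (sumR_ext _ _ (fun i => 2 * ln 2 *
      (1/2 * w i * log2R (W / w i) - w i * (1/2 + INR (Nat.log2 (i + 1))))))
    in Hgibbs by (intros; apply gibbs_term_gamma_weight; auto).
  rewrite sumR_scal, sumR_minus in Hgibbs.
  apply Rminus_ge, Rle_ge, Rmult_le_reg_l with (2 * ln 2); lra.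
Qed.
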